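(* Let $\Phi:(\mathcal{S},g)\to(\mathcal{M},\bar g)$ be an isometric immersion of an $n$-dimensional orientable Riemannian manifold into a semi-Riemannian manifold with co-dimension $k$, and assume that $\dim\mathrm{Im}\,\widetilde h_p$ is constant on $\mathcal{S}$, so that the umbilical space $\mathscr{U}$ of $\mathcal{S}$ is well defined. Let $0\le m\le k$. Then $\dim\mathscr{U}=m$ if and only if the total shear tensor satisfies $\bigwedge^{k-m+1}\widetilde h^\flat=0$ and $\bigwedge^{k-m}\widetilde h^\flat\neq0$.
   Context: $g=\Phi^\star\bar g$ is positive definite. $h$ is the second fundamental form, $A_\xi$ the shape operator of a normal $\xi$ ($g(A_\xi X,Y)=\bar g(h(X,Y),\xi)$), $H=\frac1n\mathrm{tr}_gh$, and $\widetilde h(X,Y)=h(X,Y)-g(X,Y)H$ is the total shear tensor. The shear space at $p$ is $\mathrm{Im}\,\widetilde h_p=\mathrm{span}\{\widetilde h(v,w):v,w\in T_p\mathcal{S}\}$; the umbilical space at $p$ is $\mathscr{U}_p=\{\xi_p\in T_p\mathcal{S}^\perp:A_{\xi_p}\text{ proportional to the identity}\}$. Under constant dimension, the umbilical space of $\mathcal{S}$ is $\mathscr{U}=\{\xi\text{ normal vector field}:A_\xi\text{ proportional to identity}\}$, a module over functions on $\mathcal{S}$ of dimension $\dim\mathscr{U}_p$. For a vector $V$, $V^\flat=\bar g(V,\cdot)$; $\bigwedge^q\widetilde h^\flat$ denotes the map $(X_1,Y_1,\dots,X_q,Y_q)\mapsto\widetilde h(X_1,Y_1)^\flat\wedge\cdots\wedge\widetilde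 h(X_q,Y_q)^\flat$ for tangent vector fields $X_i,Y_i$. *)

From HB Require Import structures.
From mathcomp Require Import all_boot all_order all_algebra.
From mathcomp Require Import reals.
Set Implicit Arguments. Unset Strict Implicit. Unset Printing Implicit Defensive.
Import Order.TTheory GRing.Theory Num.Theory.
Local Open Scope ring_scope.

(* Pointwise (linear-algebraic) model of an isometric immersion
   Phi : (S^n, g) -> (M^{n+k}, gbar) at a point p:
   - ambient tangent vectors at Phi(p) are row vectors 'rV_(n+k),
     the ambient metric gbar_p has Gram matrix G (symmetric, nondegenerate);
   - tangent vectors of S at p are row vectors 'rV_n (coordinates in a basis),
     dPhi_p sends X to X *m dPhi;
   - the second fundamental form h_p is the symmetric bilinear map with
     values h(e_i, e_j) = hc i j in the normal space. *)

Section Pointwise.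
Variables (R : realType) (n k : nat).
Local Notation N := (n + k)%N.

Definition bform (G : 'M[R]_N) (u v : 'rV[R]_N) : R := (u *m G *m v^T) 0 0.

Definition gmx (G : 'M[R]_N) (dPhi : 'M[R]_(n, N)) : 'M[R]_n :=
  dPhi *m G *m dPhi^T.

Definition gind (G : 'M[R]_N) (dPhi : 'M[R]_(n, N)) (X Y : 'rV[R]_n) : R :=
  bform G (X *m dPhi) (Y *m dPhi).

Definition is_normal (G : 'M[R]_N) (dPhi : 'M[R]_(n, N)) (xi : 'rV[R]_N) :=
  forall X : 'rV[R]_n, bform G (X *m dPhi) xi = 0.

Definition sff (hc : 'I_n -> 'I_n -> 'rV[R]_N) (X Y : 'rV[R]_n) : 'rV[R]_N :=
  \sum_(i < n) \sum_(j < n) (X 0 i * Y 0 j) *: hc i j.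

Definition meancurv (G : 'M[R]_N) (dPhi : 'M[R]_(n, N))
    (hc : 'I_n -> 'I_n -> 'rV[R]_N) : 'rV[R]_N :=
  (n%:R)^-1 *: \sum_(i < n) \sum_(j < n) (invmx (gmx G dPhi)) i j *: hc i j.

Definition shear G dPhi hc (X Y : 'rV[R]_n) : 'rV[R]_N :=
  sff hc X Y - gind G dPhi X Y *: meancurv G dPhi hc.

(* shape operator A_xi, acting on row vectors X |-> X *m A_xi, characterised
   by g(A_xi X, Y) = gbar(h(X,Y), xi) *)
Definition shape G dPhi hc (xi : 'rV[R]_N) : 'M[R]_n :=
  (\matrix_(i, j) bform G (hc i j) xi) *m invmx (gmx G dPhi).

Definition umbilical G dPhi hc (xi : 'rV[R]_N) : Prop :=
  is_normal G dPhi xi /\ is_scalar_mx (shape G dPhi hc xi).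

Definition shear_set G dPhi hc (v : 'rV[R]_N) : Prop :=
  exists X Y, v = shear G dPhi hc X Y.

Definition span_dim (P : 'rV[R]_N -> Prop) (d : nat) : Prop :=
  exists B : 'M[R]_(d, N),
    [/\ row_free B, forall i, P (row i B) & forall v, P v -> (v <= B)%MS].

(* ( /\^q h~^flat )(X_1,Y_1,...,X_q,Y_q) evaluated on ambient vectors
   u_1..u_q :  det [ gbar(h~(X_i,Y_i), u_j) ]_{i,j} *)
Definition wedge_shear G dPhi hc (q : nat)
    (XY : 'I_q -> 'rV[R]_n * 'rV[R]_n) (u : 'I_q -> 'rV[R]_N) : R :=
  \det (\matrix_(i, j) bform G (shear G dPhi hc (XY i).1 (XY i).2) (u j)).

End Pointwise.

Section Global.
Variables (R : realType) (n k : nat) (S : Type).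
Variables (G : S -> 'M[R]_(n + k)) (dPhi : S -> 'M[R]_(n, n + k))
          (hc : S -> 'I_n -> 'I_n -> 'rV[R]_(n + k)).

Definition wedge_shear_zero (q : nat) : Prop :=
  forall p XY u, wedge_shear (G p) (dPhi p) (hc p) (q := q) XY u = 0.

Definition umb_dim (m : nat) : Prop :=
  forall p, span_dim (umbilical (G p) (dPhi p) (hc p)) m.

End Global.

From Pilot Require Import Defs.
From HB Require Import structures.
From mathcomp Require Import all_boot all_order all_algebra.
From mathcomp Require Import reals.
From mathcomp Require Import zify.
Set Implicit Arguments. Unset Strict Implicit. Unset Printing Implicit Defensive.
Import Order.TTheory GRing.Theory Num.Theory.
Local Open Scope ring_scope.

(* Everything happens pointwise; let d be the constant dimension of the shear
   space. A normal xi is umbilical iff gbar(h(X,Y), xi) = a g(X,Y) for some a,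
   and taking the g-trace forces a = gbar(H, xi): so U_p is the space of normal
   vectors orthogonal to the shear space. The shear space is normal and the
   tangent space is nondegenerate, so tangent + shear space has dimension n + d
   and its gbar-orthogonal complement has dimension k - d. On the other side,
   /\^q h~^flat evaluated on u_1..u_q is det (S G U^T) for S, U the matrices of
   rows h~(X_i,Y_i), u_j; as G is invertible, this vanishes for all choices iff
   every q shear vectors are dependent, i.e. iff q > d. Hence dim U = m iff
   d = k - m iff /\^(k-m+1) h~^flat = 0 and /\^(k-m) h~^flat <> 0. *)

Lemma row_free_detP (F : fieldType) (q N : nat) (G : 'M[F]_N) (S : 'M[F]_(q, N)) :
  G \in unitmx -> (exists U : 'M_(q, N), \det (S *m G *m U^T) != 0) <-> row_free S.
Proof.
move=> G_unit; split => [[U detU] | S_free].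
- rewrite /row_free eqn_leq rank_leq_row /=.
  have /mxrank_unit {1}<- : S *m G *m U^T \in unitmx by rewrite unitmxE unitfE.
  exact: leq_trans (mxrankM_maxl _ _) (mxrankM_maxl _ _).
- have /row_freeP [V SGV] : row_free (S *m G).
    by rewrite /row_free mxrankMfree ?row_free_unit.
  by exists V^T; rewrite trmxK SGV det1 oner_neq0.
Qed.

Lemma row_free_rowsub_widen (F : fieldType) (q d N : nat) (le_qd : (q <= d)%N)
    (B : 'M[F]_(d, N)) :
  row_free B -> row_free (rowsub (widen_ord le_qd) B).
Proof.
move=> B_free; rewrite /row_free rowsubE mxrankMfree //.
have -> : rowsub (widen_ord le_qd) 1%:M = pid_mx q :> 'M[F]_(q, d).
  by apply/matrixP => i j; rewrite !mxE ltn_ord andbT.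
by rewrite rank_pid_mx.
Qed.

Lemma span_dim_rank (R : realType) (n k : nat) (P : 'rV[R]_(n + k) -> Prop)
    (r : nat) (K : 'M[R]_(r, n + k)) :
  (forall v, P v <-> (v <= K)%MS) -> forall d, span_dim P d <-> d = \rank K.
Proof.
move=> PK d; split => [[B [B_free PB BP]] | ->].
- have B_K : (B <= K)%MS by apply/row_subP => i; apply/PK.
  have K_B : (K <= B)%MS by apply/row_subP => i; apply/BP/PK/row_sub.
  by rewrite -(eqP B_free); apply/eqP; rewrite eqn_leq !mxrankS.
- exists (row_base K); split; first exact: row_base_free.
  + by move=> i; apply/PK; rewrite (submx_trans (row_sub i _)) // eq_row_base.
  + by move=> v /PK; rewrite eq_row_base.
Qed.

Section Bform.
Variables (R : realType) (n k : nat).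
Local Notation N := (n + k)%N.
Variable G : 'M[R]_N.
Hypothesis G_sym : G^T = G.

Lemma bform_suml (I : Type) (r : seq I) (P : pred I) (F : I -> 'rV[R]_N) v :
  bform G (\sum_(i <- r | P i) F i) v = \sum_(i <- r | P i) bform G (F i) v.
Proof. by rewrite /bform !mulmx_suml summxE. Qed.

Lemma bformZl a u v : bform G (a *: u) v = a * bform G u v.
Proof. by rewrite /bform -!scalemxAl mxE. Qed.

Lemma bformBl u w v : bform G (u - w) v = bform G u v - bform G w v.
Proof. by rewrite /bform !mulmxBl !mxE. Qed.

Lemma bformC u v : bform G u v = bform G v u.
Proof.
rewrite /bform -[in RHS](trmxK (v *m G *m u^T)) [in RHS]mxE.
by rewrite !trmx_mul trmxK G_sym mulmxA.
Qed.

Lemma bform_row_mx (d : nat) (B : 'M[R]_(d, N)) u r :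
  (u *m (G *m B^T)) 0 r = bform G u (row r B).
Proof. by rewrite /bform tr_row colE !mulmxA -colE [RHS]mxE. Qed.

Lemma bform_gram (q r : nat) (S : 'M[R]_(q, N)) (U : 'M[R]_(r, N)) :
  S *m G *m U^T = \matrix_(i, j) bform G (row i S) (row j U).
Proof.
apply/matrixP => i j; rewrite [RHS]mxE /bform -!row_mul tr_row colE mulmxA -colE.
by rewrite !mxE.
Qed.

Lemma orth_spanE (P : 'rV[R]_N -> Prop) (d : nat) (B : 'M[R]_(d, N)) xi :
  (forall i, P (row i B)) -> (forall v, P v -> (v <= B)%MS) ->
  (forall v, P v -> bform G v xi = 0) <-> xi *m (G *m B^T) = 0.
Proof.
move=> PB BP; split => [orth | orthB v /BP /submxP [w ->]].
  by apply/rowP => r; rewrite bform_row_mx bformC orth // mxE.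
by rewrite bformC /bform trmx_mul !mulmxA -(mulmxA xi) orthB mul0mx mxE.
Qed.

End Bform.

Section Point.
Variables (R : realType) (n k : nat).
Local Notation N := (n + k)%N.
Variables (G : 'M[R]_N) (D : 'M[R]_(n, N)) (hc : 'I_n -> 'I_n -> 'rV[R]_N).
Hypothesis G_sym : G^T = G.
Hypothesis G_unit : G \in unitmx.
Hypothesis g_pos : forall X : 'rV[R]_n, X != 0 -> 0 < gind G D X X.
Hypothesis hc_normal : forall i j, is_normal G D (hc i j).

Local Notation g := (gmx G D).
Local Notation H := (meancurv G D hc).

Lemma gmx_sym : g^T = g.
Proof. by rewrite /gmx !trmx_mul trmxK G_sym mulmxA. Qed.

Lemma gindE X Y : gind G D X Y = (X *m g *m Y^T) 0 0.
Proof. by rewrite /gind /bform /gmx trmx_mul !mulmxA. Qed.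

Lemma gind_sum X Y : gind G D X Y = \sum_i \sum_j (X 0 i * Y 0 j) * g i j.
Proof.
rewrite gindE mxE exchange_big; apply: eq_bigr => j _.
by rewrite !mxE mulr_suml; apply: eq_bigr => i _; rewrite mulrAC.
Qed.

Lemma gmx_unit : g \in unitmx.
Proof.
rewrite -row_free_unit; apply: inj_row_free => X Xg0; apply/eqP.
by apply: contraT => /g_pos; rewrite gindE Xg0 mul0mx mxE ltxx.
Qed.

Lemma is_normalE xi : is_normal G D xi <-> xi *m (G *m D^T) = 0.
Proof.
have orthD := orth_spanE G_sym (P := fun v => exists X, v = X *m D) (B := D) xi.
rewrite -orthD => [|i|v [X ->]]; last 2 first.
- by exists (delta_mx 0 i); rewrite -rowE.
- exact: submxMl.
by split => [normal _ [X ->] | orth X]; [apply: normal | apply: orth; exists X].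
Qed.

Lemma meancurv_normal : H *m (G *m D^T) = 0.
Proof.
rewrite /meancurv -scalemxAl mulmx_suml big1 ?scaler0 // => i _.
rewrite mulmx_suml big1 // => j _.
by rewrite -scalemxAl (is_normalE _).1 ?scaler0.
Qed.

Definition shear_ij i j := hc i j - g i j *: H.

Lemma shear_sum X Y :
  shear G D hc X Y = \sum_i \sum_j (X 0 i * Y 0 j) *: shear_ij i j.
Proof.
rewrite /shear /sff gind_sum scaler_suml -sumrB; apply: eq_bigr => i _.
rewrite scaler_suml -sumrB; apply: eq_bigr => j _.
by rewrite /shear_ij scalerBr [in RHS]scalerA.
Qed.

Lemma shear_delta i j : shear G D hc (delta_mx 0 i) (delta_mx 0 j) = shear_ij i j.
Proof.
rewrite shear_sum (bigD1 i) //= [X in _ + X]big1 => [|a /negbTE ai]; last first.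
  by apply: big1 => b _; rewrite !mxE ai mul0r scale0r.
rewrite addr0 (bigD1 j) //= [X in _ + X]big1 => [|b /negbTE bj]; last first.
  by rewrite !mxE bj mulr0 scale0r.
by rewrite !mxE !eqxx mulr1 scale1r addr0.
Qed.

Lemma shear_normal X Y : shear G D hc X Y *m (G *m D^T) = 0.
Proof.
rewrite shear_sum mulmx_suml big1 // => i _; rewrite mulmx_suml big1 // => j _.
rewrite -scalemxAl /shear_ij mulmxBl -scalemxAl meancurv_normal.
by rewrite (is_normalE _).1 // scaler0 subr0 scaler0.
Qed.

Lemma orth_shear_set xi :
  (forall v, shear_set G D hc v -> bform G v xi = 0) <->
  (forall i j, bform G (shear_ij i j) xi = 0).
Proof.
split => [orth i j | orth v [X [Y ->]]].
  by apply: orth; exists (delta_mx 0 i), (delta_mx 0 j); rewrite shear_delta.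
rewrite shear_sum bform_suml big1 // => i _; rewrite bform_suml big1 // => j _.
by rewrite bformZl orth mulr0.
Qed.

Local Notation hflat xi := (\matrix_(i, j) bform G (hc i j) xi).

Lemma bform_meancurv_scalar xi a :
  (0 < n)%N -> hflat xi = a *: g -> bform G H xi = a.
Proof.
move=> n_gt0 h_ag.
have h_ij i j : bform G (hc i j) xi = a * g i j.
  by have := congr1 (fun M : 'M[R]_n => M i j) h_ag; rewrite !mxE.
have trace_g : \sum_i \sum_j invmx g i j * g i j = n%:R.
  rewrite -(mxtrace1 R n) -(mulVmx gmx_unit); apply: eq_bigr => i _.
  rewrite mxE; apply: eq_bigr => j _.
  by move/matrixP/(_ i j): gmx_sym; rewrite mxE => ->.
rewrite /meancurv bformZl bform_suml.
transitivity (n%:R^-1 * (a * n%:R)); last first.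
  by rewrite mulrCA mulVf ?mulr1 // pnatr_eq0 -lt0n.
congr (_ * _); rewrite -trace_g mulr_sumr; apply: eq_bigr => i _.
rewrite bform_suml mulr_sumr; apply: eq_bigr => j _.
by rewrite bformZl h_ij mulrCA.
Qed.

Lemma shape_scalarP xi :
  is_scalar_mx (Defs.shape G D hc xi) <-> forall i j, bform G (shear_ij i j) xi = 0.
Proof.
have shear_ijE i j : bform G (shear_ij i j) xi = hflat xi i j - bform G H xi * g i j.
  by rewrite bformBl bformZl mxE mulrC.
split => [/is_scalar_mxP [a shape_a] i j | orth].
- have h_ag : hflat xi = a *: g.
    by rewrite -mul_scalar_mx -shape_a /Defs.shape (mulmxKV gmx_unit).
  have n_gt0 : (0 < n)%N := leq_ltn_trans (leq0n i) (ltn_ord i).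
  by rewrite shear_ijE (bform_meancurv_scalar n_gt0 h_ag) h_ag mxE subrr.
- apply/is_scalar_mxP; exists (bform G H xi); rewrite /Defs.shape.
  have -> : hflat xi = bform G H xi *: g.
    apply/matrixP => i j; rewrite [in RHS]mxE; apply/eqP.
    by rewrite -subr_eq0 -shear_ijE orth.
  by rewrite -scalemxAl (mulmxV gmx_unit) scalemx1.
Qed.

Lemma umbilicalE xi :
  umbilical G D hc xi <->
  is_normal G D xi /\ forall v, shear_set G D hc v -> bform G v xi = 0.
Proof. by rewrite /umbilical shape_scalarP orth_shear_set. Qed.

Lemma rank_dPhi : \rank D = n.
Proof.
apply/eqP; rewrite eqn_leq rank_leq_row /= -{1}(mxrank_unit gmx_unit) /gmx.
exact: leq_trans (mxrankM_maxl _ _) (mxrankM_maxl _ _).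
Qed.

Section NormalFamily.
Variables (d : nat) (B : 'M[R]_(d, N)).
Hypothesis B_normal : B *m (G *m D^T) = 0.

Lemma capmx_tangent_normal : (D :&: B)%MS = 0.
Proof.
apply/eqP; rewrite -submx0; apply/row_subP => r.
have := row_sub r (D :&: B)%MS.
rewrite sub_capmx => /andP[/submxP [X ->] /submxP [w Xw]].
have Xg0 : X *m g = 0.
  by rewrite /gmx !mulmxA -(mulmxA (X *m D)) Xw -mulmxA B_normal mulmx0.
by rewrite -[X](mulmxK gmx_unit) Xg0 !mul0mx sub0mx.
Qed.

Lemma rank_tangent_normal : row_free B -> \rank (col_mx D B) = (n + d)%N.
Proof.
move=> /eqP rank_B; have := mxrank_sum_cap D B.
by rewrite capmx_tangent_normal mxrank0 addn0 addsmxE rank_dPhi rank_B.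
Qed.

End NormalFamily.

Section ShearBasis.
Variables (d : nat) (B : 'M[R]_(d, N)).
Hypotheses (B_free : row_free B) (B_shear : forall i, shear_set G D hc (row i B))
  (shear_B : forall v, shear_set G D hc v -> (v <= B)%MS).

Lemma shear_basis_normal : B *m (G *m D^T) = 0.
Proof.
apply/row_matrixP => i; rewrite row_mul row0.
by have [X [Y ->]] := B_shear i; exact: shear_normal.
Qed.

Lemma umbilical_kerE xi : umbilical G D hc xi <-> xi *m (G *m (col_mx D B)^T) = 0.
Proof.
rewrite umbilicalE is_normalE (orth_spanE G_sym _ B_shear shear_B).
rewrite tr_col_mx !mul_mx_row.
split => [[-> ->]|/eqP]; first by rewrite row_mx0.
by rewrite row_mx_eq0 => /andP[/eqP -> /eqP ->].
Qed.

End ShearBasis.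

Variables (d : nat).
Hypothesis shear_dim : span_dim (shear_set G D hc) d.

Lemma shear_dim_le_codim : (d <= k)%N.
Proof.
have [B [B_free B_shear _]] := shear_dim.
have := rank_leq_col (col_mx D B).
by rewrite (rank_tangent_normal (shear_basis_normal B_shear) B_free) leq_add2l.
Qed.

Lemma umbilical_dim m : span_dim (umbilical G D hc) m <-> m = (k - d)%N.
Proof.
have [B [B_free B_shear shear_B]] := shear_dim.
rewrite (span_dim_rank (K := kermx (G *m (col_mx D B)^T))) => [|xi]; last first.
  by rewrite (umbilical_kerE B_shear shear_B) sub_kermx; exact: (rwP eqP).
rewrite mxrank_ker -mxrank_tr trmx_mul trmxK mxrankMfree ?row_free_unit ?unitmx_tr //.
by rewrite (rank_tangent_normal (shear_basis_normal B_shear) B_free) subnDl.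
Qed.

Lemma wedge_shearE q XY (u : 'I_q -> 'rV[R]_N) :
  wedge_shear G D hc XY u =
  \det ((\matrix_i shear G D hc (XY i).1 (XY i).2) *m G *m (\matrix_j u j)^T).
Proof.
by rewrite bform_gram; congr (\det _); apply/matrixP => i j; rewrite !mxE !rowK.
Qed.

Lemma wedge_shear_eq0 q :
  (forall XY u, wedge_shear G D hc (q := q) XY u = 0) <-> (d < q)%N.
Proof.
have [B [B_free B_shear shear_B]] := shear_dim.
pose S XY := \matrix_(i < q) shear G D hc (XY i).1 (XY i).2.
have wedge_free XY : (forall u, wedge_shear G D hc XY u = 0) <-> ~ row_free (S XY).
  rewrite -(row_free_detP _ G_unit); split => [all0 [U] | not_free u].
    have := all0 (fun j => row j U); rewrite wedge_shearE -/(S XY).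
    have -> : \matrix_j row j U = U by apply/row_matrixP => j; rewrite rowK.
    by move=> ->; rewrite eqxx.
  apply/eqP; apply/negPn/negP => det_u; apply: not_free.
  by exists (\matrix_j u j); rewrite -wedge_shearE.
have rank_S XY : row_free (S XY) -> (q <= d)%N.
  move=> /eqP <-; rewrite -(eqP B_free); apply: mxrankS.
  by apply/row_subP => i; rewrite rowK; apply: shear_B; exists (XY i).1, (XY i).2.
split => [all0 | lt_dq XY].
- rewrite ltnNge; apply/negP => le_qd.
  have [XY S_B] : exists XY, S XY = rowsub (widen_ord le_qd) B.
    have /fin_all_exists [XY XY_B] : forall i, exists XY : 'rV[R]_n * 'rV[R]_n,
        row (widen_ord le_qd i) B = shear G D hc XY.1 XY.2.
      by move=> i; have [X [Y ->]] := B_shear (widen_ord le_qd i); exists (X, Y).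
    by exists XY; apply/row_matrixP => i; rewrite rowK row_rowsub XY_B.
  by apply: (wedge_free XY).1 (all0 XY) _; rewrite S_B row_free_rowsub_widen.
- by apply/wedge_free => /rank_S; rewrite leqNgt lt_dq.
Qed.

End Point.

Theorem proposition3p4 (R : realType) (n k : nat) (S : Type) (p0 : S)
    (G : S -> 'M[R]_(n + k)) (dPhi : S -> 'M[R]_(n, n + k))
    (hc : S -> 'I_n -> 'I_n -> 'rV[R]_(n + k))
    (* semi-Riemannian ambient metric: symmetric and nondegenerate *)
    (HGsym : forall p, (G p)^T = G p)
    (HGnd : forall p, G p \in unitmx)
    (* g = Phi^* gbar is positive definite (Riemannian) *)
    (Hgpos : forall p (X : 'rV[R]_n), X != 0 -> 0 < gind (G p) (dPhi p) X X)
    (* h is symmetric and normal-valued *)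
    (Hhsym : forall p i j, hc p i j = hc p j i)
    (Hhnor : forall p i j, is_normal (G p) (dPhi p) (hc p i j))
    (* dim Im h~_p is constant on S *)
    (Hconst : exists d, forall p, span_dim (shear_set (G p) (dPhi p) (hc p)) d)
    (m : nat) (Hm : (m <= k)%N) :
  umb_dim G dPhi hc m <->
  (wedge_shear_zero G dPhi hc (k - m).+1 /\ ~ wedge_shear_zero G dPhi hc (k - m)).
Proof.
have [d shear_dim] := Hconst.
have d_le_k : (d <= k)%N :=
  shear_dim_le_codim (HGsym p0) (Hgpos p0) (Hhnor p0) (shear_dim p0).
have umb_dimE : umb_dim G dPhi hc m <-> m = (k - d)%N.
  have umbE p := umbilical_dim (HGsym p) (HGnd p) (Hgpos p) (Hhnor p) (shear_dim p) m.
  by split => [/(_ p0)/(umbE p0) | m_kd p]; last apply/umbE.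
have wedgeE q : wedge_shear_zero G dPhi hc q <-> (d < q)%N.
  have wedgeE p := wedge_shear_eq0 (HGnd p) (shear_dim p) q.
  by split => [/(_ p0)/(wedgeE p0) | lt_dq p]; last apply/wedgeE.
rewrite umb_dimE !wedgeE; lia.
Qed.
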